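(* Every connected infinite graph $G$ with uniformly bounded vertex degrees and finite asymptotic dimension is weighted hyperfinite.
   Context: A graph $G$ has asymptotic dimension at most $d$ (finite $d$) if for every $r>0$ there is $R=R(r)$ and vertex-disjoint induced subgraphs $\mathcal U_1,\dots,\mathcal U_d$ of $G$ covering $V(G)$ such that for each $i$, each connected component of $\mathcal U_i$ has diameter at most $R$ and any two distinct components of $\mathcal U_i$ are at distance at least $r$ in $G$. A connected infinite bounded-degree graph $G$ is weighted hyperfinite if for every $\epsilon>0$ there is $K_\epsilon>0$ such that for every finite induced subgraph $L\subseteq G$ and every $w:V(L)\to[0,\infty)$ there is $M\subseteq V(L)$ with $\sum_{x\in M}w(x)\le\epsilon\sum_{x\in V(L)}w(x)$ such that every connected component of $L$ with $M$ deleted has at most $K_\epsilon$ vertices. *)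

From Stdlib Require Import Reals List Arith.
Import ListNotations.
Open Scope R_scope.

Section Graphs.
Variable V : Type.
Variable adj : V -> V -> Prop.

Inductive walk_in (P : V -> Prop) : nat -> V -> V -> Prop :=
| walk_nil x : P x -> walk_in P 0 x x
| walk_cons n x y z : P x -> adj x y -> walk_in P n y z -> walk_in P (S n) x z.

Definition walk (n : nat) (x y : V) : Prop := walk_in (fun _ => True) n x y.

Definition simple_graph : Prop :=
  (forall x y, adj x y -> adj y x) /\ (forall x, ~ adj x x).

Definition connected_graph : Prop := forall x y, exists n, walk n x y.

Definition infinite_graph : Prop := ~ exists l : list V, forall v, In v l.

Definition degree_bounded_by (D : nat) : Prop :=
  forall v (l : list V), NoDup l -> (forall w, In w l -> adj v w) ->
    (length l <= D)%nat.

Definition bounded_degree : Prop := exists D, degree_bounded_by D.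

Definition dist_le (x y : V) (n : nat) : Prop := exists m, (m <= n)%nat /\ walk m x y.

(* Asymptotic dimension at most d: for every r > 0 there are R and a partition
   of V(G) into d classes U_0..U_{d-1} (col v = i  <->  v in U_i) such that
   each component of G[U_i] has (G-)diameter <= R, and any two vertices in
   distinct components of G[U_i] are at G-distance >= r. *)
Definition asdim_at_most (d : nat) : Prop :=
  forall r : nat, (0 < r)%nat ->
  exists (R : nat) (col : V -> nat),
    (forall v, (col v < d)%nat) /\
    forall i,
      (forall x y, col x = i -> col y = i ->
         (exists n, walk_in (fun v => col v = i) n x y) -> dist_le x y R) /\
      (forall x y, col x = i -> col y = i ->
         ~ (exists n, walk_in (fun v => col v = i) n x y) ->
         forall n, walk n x y -> (r <= n)%nat).

Definition finite_asdim : Prop := exists d : nat, asdim_at_most d.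

Definition sumw (w : V -> R) (l : list V) : R := fold_right Rplus 0 (map w l).

(* A finite induced subgraph L is given by a
   duplicate-free list l of its vertices; M is a duplicate-free sublist m.
   The component in L - M of a vertex x consists of the y reachable from x by a
   walk inside V(L) \ M; it must have at most K vertices. *)
Definition weighted_hyperfinite : Prop :=
  forall eps : R, 0 < eps ->
  exists K : nat, (0 < K)%nat /\
  forall (l : list V) (w : V -> R), NoDup l ->
    (forall x, In x l -> 0 <= w x) ->
    exists m : list V, NoDup m /\ incl m l /\
      sumw w m <= eps * sumw w l /\
      forall x, In x l -> ~ In x m ->
      forall c : list V, NoDup c ->
        (forall y, In y c -> exists n,
            walk_in (fun v => In v l /\ ~ In v m) n x y) ->
        (length c <= K)%nat.

End Graphs.

From Stdlib Require Import Reals List Arith Lia Lra ClassicalEpsilon Classical.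
Import ListNotations.
Open Scope R_scope.

(* Fix eps > 0, an integer T with d < eps * T, and a cover by d colour classes
   whose monochromatic components have diameter <= R and are pairwise
   2T-separated.  For k < T, the k-th shell of colour j consists of the
   vertices at distance exactly k+1 from the class U_j.  A vertex lies in at
   most one k-shell of each colour, hence in at most d of the T shell layers;
   averaging the weight over the T layers gives a layer k of weight at most
   (d / T) * w(L) <= eps * w(L), which is the removed set M.  A walk avoiding
   the k-shell of colour col x stays within distance k of the monochromatic
   component of x (the separation 2T > 2k + 1 prevents jumping to another
   component), so every component of L - M lies in the ball of radius R + T
   around x, which bounded degree makes of size at most (D+1)^(R+T). *)

Lemma exists_max_nat (P : nat -> Prop) (B k0 : nat) :
  P k0 -> (forall k, P k -> (k <= B)%nat) ->
  exists k, P k /\ forall k', P k' -> (k' <= k)%nat.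
Proof.
  intros Pk0 HB.
  assert (Hgen : forall n k, P k -> (B - k <= n)%nat ->
            exists m, P m /\ forall k', P k' -> (k' <= m)%nat).
  { induction n as [|n IH]; intros k Pk Hk.
    - exists k; split; [exact Pk|]. intros k' Pk'. pose proof (HB k Pk). pose proof (HB k' Pk'). lia.
    - destruct (classic (exists k', P k' /\ (k < k')%nat)) as [[k' [Pk' Hlt]]|Hnone].
      + apply (IH k' Pk'). pose proof (HB k' Pk'). lia.
      + exists k; split; [exact Pk|]. intros k' Pk'.
        destruct (le_lt_dec k' k) as [Hle|Hlt]; [exact Hle|].
        exfalso; apply Hnone; eauto. }
  exact (Hgen B k0 Pk0 (Nat.le_sub_l B k0)).
Qed.

Section Walks.
Context {V : Type} {adj : V -> V -> Prop}.

Lemma walk_in_start P n a b : walk_in V adj P n a b -> P a.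
Proof. intros Hw; destruct Hw; assumption. Qed.

Lemma walk_in_app P n m a b c :
  walk_in V adj P n a b -> walk_in V adj P m b c -> walk_in V adj P (n + m) a c.
Proof. intros Hab; induction Hab; intros Hbc; simpl; [exact Hbc|]. econstructor; eauto. Qed.

Lemma dist_le_refl x : dist_le V adj x x 0.
Proof. exists 0%nat; split; [lia|]. constructor; exact I. Qed.

Lemma dist_le_mono x y n m : (n <= m)%nat -> dist_le V adj x y n -> dist_le V adj x y m.
Proof. intros Hnm [k [Hk Hw]]; exists k; split; [lia|exact Hw]. Qed.

Lemma dist_le_trans x y z n m :
  dist_le V adj x y n -> dist_le V adj y z m -> dist_le V adj x z (n + m).
Proof.
  intros [k [Hk Hw]] [k' [Hk' Hw']]; exists (k + k')%nat; split; [lia|].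
  eapply walk_in_app; eauto.
Qed.

Hypothesis adj_sym : forall x y, adj x y -> adj y x.

Lemma walk_in_rev P n a b : walk_in V adj P n a b -> walk_in V adj P n b a.
Proof.
  intros Hw; induction Hw as [x Px|n x y z Px Hxy Hyz IH].
  - constructor; exact Px.
  - replace (S n) with (n + 1)%nat by lia.
    apply walk_in_app with y; [exact IH|].
    econstructor; [exact (walk_in_start _ _ _ _ Hyz) | apply adj_sym, Hxy | constructor; exact Px].
Qed.

Lemma dist_le_sym x y n : dist_le V adj x y n -> dist_le V adj y x n.
Proof. intros [k [Hk Hw]]; exists k; split; [exact Hk|]. apply walk_in_rev, Hw. Qed.

Lemma dist_le_adj a b : adj a b -> dist_le V adj b a 1.
Proof.
  intros Hab; exists 1%nat; split; [lia|].
  econstructor; [exact I | apply adj_sym, Hab | constructor; exact I].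
Qed.

End Walks.

Section Balls.
Context {V : Type} {adj : V -> V -> Prop}.
Hypothesis adj_sym : forall x y, adj x y -> adj y x.
Variable D : nat.
Hypothesis degree_D : degree_bounded_by V adj D.

(* A maximal duplicate-free list of neighbours contains every neighbour. *)
Lemma neighbour_list b : exists N : list V, (length N <= D)%nat /\ forall y, adj b y -> In y N.
Proof.
  set (P := fun k => exists l : list V,
              NoDup l /\ (forall y, In y l -> adj b y) /\ length l = k).
  destruct (exists_max_nat P D 0) as [k [[l [Hnd [Hadj Hlen]]] Hmax]].
  - exists nil; repeat split; [constructor | intros y []].
  - intros k [l [Hnd [Hadj <-]]]; exact (degree_D b l Hnd Hadj).
  - exists l; split; [exact (degree_D b l Hnd Hadj)|].
    intros y Hy; apply NNPP; intros Hnot.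
    assert (Hbig : P (S k)).
    { exists (y :: l); repeat split.
      - constructor; assumption.
      - intros z [<-|Hz]; [exact Hy | exact (Hadj z Hz)].
      - simpl; lia. }
    pose proof (Hmax _ Hbig); lia.
Qed.

Lemma neighbours_of_list (B : list V) :
  exists N, (length N <= D * length B)%nat /\ forall b y, In b B -> adj b y -> In y N.
Proof.
  induction B as [|b B [N [HN HNin]]].
  - exists nil; split; [simpl; lia | intros _ _ []].
  - destruct (neighbour_list b) as [N1 [HN1 HN1in]].
    exists (N1 ++ N); split.
    + rewrite length_app; simpl; rewrite Nat.mul_succ_r; lia.
    + intros b' y [<-|Hb] Hy; apply in_or_app; [left|right]; eauto.
Qed.

Lemma ball_list x n :
  exists B : list V, (length B <= (S D) ^ n)%nat /\
    forall y, dist_le V adj y x n -> In y B.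
Proof.
  induction n as [|n [B [HB HBin]]].
  - exists [x]; split; [simpl; lia|].
    intros y [m [Hm Hw]]. assert (m = 0%nat) by lia; subst.
    inversion Hw; subst; left; reflexivity.
  - destruct (neighbours_of_list B) as [N [HN HNin]].
    exists (B ++ N); split.
    + rewrite length_app; simpl; nia.
    + intros y [m [Hm Hw]]; apply in_or_app.
      destruct (le_lt_dec m n) as [Hle|Hlt].
      * left; apply HBin; exists m; split; assumption.
      * right; assert (m = S n) by lia; subst.
        inversion Hw as [|? ? z ? _ Hyz Hzx]; subst.
        apply (HNin z y); [apply HBin; exists n; split; [lia|exact Hzx] | apply adj_sym, Hyz].
Qed.

Lemma ball_card_bound x n (c : list V) :
  NoDup c -> (forall y, In y c -> dist_le V adj y x n) -> (length c <= (S D) ^ n)%nat.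
Proof.
  intros Hnd Hc. destruct (ball_list x n) as [B [HB HBin]].
  apply Nat.le_trans with (length B); [|exact HB].
  apply NoDup_incl_length; [exact Hnd|]. intros y Hy; apply HBin, Hc, Hy.
Qed.

End Balls.

Fixpoint sumr (f : nat -> R) (n : nat) : R :=
  match n with O => 0 | S n => sumr f n + f n end.

Lemma sumr_le f g n : (forall k, (k < n)%nat -> f k <= g k) -> sumr f n <= sumr g n.
Proof.
  induction n as [|n IH]; simpl; intros Hfg; [lra|].
  assert (f n <= g n) by (apply Hfg; lia).
  assert (sumr f n <= sumr g n) by (apply IH; intros; apply Hfg; lia). lra.
Qed.

Lemma sumr_ext f g n : (forall k, f k = g k) -> sumr f n = sumr g n.
Proof. intros Hfg; induction n as [|n IH]; simpl; [reflexivity|]. rewrite IH, Hfg; reflexivity. Qed.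

Lemma sumr_plus f g n : sumr (fun k => f k + g k) n = sumr f n + sumr g n.
Proof. induction n as [|n IH]; simpl; [lra|]. rewrite IH; lra. Qed.

Lemma sumr_const c n : sumr (fun _ => c) n = INR n * c.
Proof. induction n as [|n IH]; simpl sumr; [simpl; lra|]. rewrite IH, S_INR; lra. Qed.

Lemma sumr_scal c f n : sumr (fun k => c * f k) n = c * sumr f n.
Proof. induction n as [|n IH]; simpl; [lra|]. rewrite IH; lra. Qed.

Lemma sumr_comm (f : nat -> nat -> R) n m :
  sumr (fun i => sumr (fun j => f i j) m) n = sumr (fun j => sumr (fun i => f i j) n) m.
Proof.
  induction n as [|n IH]; simpl.
  - rewrite sumr_const; lra.
  - rewrite IH, <- sumr_plus; reflexivity.
Qed.

Lemma sumr_nonneg f n : (forall k, 0 <= f k) -> 0 <= sumr f n.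
Proof. intros Hf; induction n as [|n IH]; simpl; [lra|]. specialize (Hf n); lra. Qed.

Lemma sumr_pigeon (f : nat -> R) T c :
  (0 < T)%nat -> sumr f T <= INR T * c -> exists k, (k < T)%nat /\ f k <= c.
Proof.
  intros HT Hs. apply NNPP; intros Hnone.
  assert (Hall : forall k, (k < T)%nat -> c < f k).
  { intros k Hk. apply Rnot_le_lt; intros Hle; apply Hnone; eauto. }
  assert (Hlt : sumr (fun _ => c) T < sumr f T).
  { destruct T as [|T]; [lia|]. simpl.
    assert (sumr (fun _ => c) T <= sumr f T) by (apply sumr_le; intros; left; apply Hall; lia).
    pose proof (Hall T (Nat.lt_succ_diag_r T)); lra. }
  rewrite sumr_const in Hlt; lra.
Qed.

Definition decide_prop (P : Prop) : bool :=
  if excluded_middle_informative P then true else false.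

Lemma decide_prop_true P : decide_prop P = true <-> P.
Proof. unfold decide_prop; destruct (excluded_middle_informative P); split; congruence || tauto. Qed.

Definition ind (P : Prop) : R := if decide_prop P then 1 else 0.

Lemma ind_true P : P -> ind P = 1.
Proof. intros HP; unfold ind, decide_prop; destruct (excluded_middle_informative P); tauto. Qed.

Lemma ind_false P : ~ P -> ind P = 0.
Proof. intros HP; unfold ind, decide_prop; destruct (excluded_middle_informative P); tauto. Qed.

Lemma ind_ge0 P : 0 <= ind P.
Proof. unfold ind; destruct (decide_prop P); lra. Qed.

Lemma ind_exists (Q : nat -> Prop) d :
  ind (exists j, (j < d)%nat /\ Q j) <= sumr (fun j => ind (Q j)) d.
Proof.
  induction d as [|d IH]; simpl.
  - rewrite ind_false; [lra|]. intros [j [Hj _]]; lia.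
  - pose proof (ind_ge0 (Q d)).
    destruct (classic (exists j, (j < S d)%nat /\ Q j)) as [[j [Hj Qj]]|Hnone].
    + rewrite (ind_true _ (ex_intro _ j (conj Hj Qj))).
      destruct (Nat.eq_dec j d) as [->|Hjd].
      * rewrite (ind_true _ Qj).
        pose proof (sumr_nonneg (fun j => ind (Q j)) d (fun j => ind_ge0 (Q j))); lra.
      * rewrite (ind_true (exists j, (j < d)%nat /\ Q j)) in IH by (exists j; split; [lia|exact Qj]).
        lra.
    + rewrite (ind_false _ Hnone).
      pose proof (sumr_nonneg (fun j => ind (Q j)) d (fun j => ind_ge0 (Q j))); lra.
Qed.

Lemma sumr_ind_unique (P : nat -> Prop) T :
  (forall a b, P a -> P b -> a = b) -> sumr (fun k => ind (P k)) T <= 1.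
Proof.
  intros Huniq; induction T as [|T IH]; simpl; [lra|].
  destruct (classic (P T)) as [HT|HT].
  - rewrite (ind_true _ HT).
    assert (sumr (fun k => ind (P k)) T <= sumr (fun _ => 0) T).
    { apply sumr_le; intros k Hk. rewrite ind_false; [lra|].
      intros Pk; pose proof (Huniq _ _ Pk HT); lia. }
    rewrite sumr_const in H; lra.
  - rewrite (ind_false _ HT); lra.
Qed.

Section Averaging.
Context {V : Type}.

Lemma sumw_nonneg (w : V -> R) l : (forall y, In y l -> 0 <= w y) -> 0 <= sumw V w l.
Proof.
  induction l as [|y l IH]; intros Hw; unfold sumw; simpl; [lra|]. fold (sumw V w l).
  pose proof (Hw y (or_introl eq_refl)).
  pose proof (IH (fun z Hz => Hw z (or_intror Hz))); lra.
Qed.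

Lemma sum_filter_bound (w : V -> R) (P : nat -> V -> Prop) T c (l : list V) :
  (forall y, In y l -> 0 <= w y) ->
  (forall y, In y l -> sumr (fun k => ind (P k y)) T <= c) ->
  sumr (fun k => sumw V w (filter (fun y => decide_prop (P k y)) l)) T <= c * sumw V w l.
Proof.
  induction l as [|y l IH]; intros Hw Hc.
  - rewrite (sumr_ext _ (fun _ => 0)) by reflexivity.
    rewrite sumr_const; unfold sumw; simpl; lra.
  - rewrite (sumr_ext _ (fun k => w y * ind (P k y)
                 + sumw V w (filter (fun y => decide_prop (P k y)) l))).
    2:{ intros k; unfold sumw, ind; simpl; destruct (decide_prop (P k y)); simpl; ring. }
    rewrite sumr_plus, sumr_scal.
    change (sumw V w (y :: l)) with (w y + sumw V w l).
    pose proof (Rmult_le_compat_l _ _ _ (Hw y (or_introl eq_refl)) (Hc y (or_introl eq_refl))).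
    pose proof (IH (fun z Hz => Hw z (or_intror Hz)) (fun z Hz => Hc z (or_intror Hz))).
    lra.
Qed.

Lemma averaging_selection (w : V -> R) (P : nat -> V -> Prop) T c (l : list V) :
  (0 < T)%nat -> (forall y, In y l -> 0 <= w y) ->
  (forall y, In y l -> sumr (fun k => ind (P k y)) T <= c) ->
  exists k, (k < T)%nat /\
    sumw V w (filter (fun y => decide_prop (P k y)) l) <= c / INR T * sumw V w l.
Proof.
  intros HT Hw Hc. apply sumr_pigeon; [exact HT|].
  assert (HTpos : 0 < INR T) by (apply lt_0_INR; exact HT).
  replace (INR T * (c / INR T * sumw V w l)) with (c * sumw V w l) by (field; lra).
  apply sum_filter_bound; assumption.
Qed.

End Averaging.

Section Shells.
Context {V : Type} {adj : V -> V -> Prop}.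
Hypothesis adj_sym : forall x y, adj x y -> adj y x.

Definition good_cover (d r R : nat) (col : V -> nat) : Prop :=
  (forall v, (col v < d)%nat) /\
  forall i,
    (forall x y, col x = i -> col y = i ->
       (exists n, walk_in V adj (fun v => col v = i) n x y) -> dist_le V adj x y R) /\
    (forall x y, col x = i -> col y = i ->
       ~ (exists n, walk_in V adj (fun v => col v = i) n x y) ->
       forall n, walk V adj n x y -> (r <= n)%nat).

Variable col : V -> nat.

Definition near_class (j : nat) (y : V) (n : nat) : Prop :=
  exists u, col u = j /\ dist_le V adj y u n.

Definition shell (j k : nat) (y : V) : Prop := near_class j y (S k) /\ ~ near_class j y k.

Definition in_some_shell (d k : nat) (y : V) : Prop := exists j, (j < d)%nat /\ shell j k y.

Lemma shell_unique j y a b : shell j a y -> shell j b y -> a = b.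
Proof.
  intros [[u [Hu Hau]] Hna] [[u' [Hu' Hbu']] Hnb].
  destruct (lt_eq_lt_dec a b) as [[Hab|Hab]|Hab]; [exfalso| exact Hab | exfalso].
  - apply Hnb; exists u; split; [exact Hu|]. eapply dist_le_mono; [|exact Hau]; lia.
  - apply Hna; exists u'; split; [exact Hu'|]. eapply dist_le_mono; [|exact Hbu']; lia.
Qed.

Lemma shell_multiplicity d T y : sumr (fun k => ind (in_some_shell d k y)) T <= INR d.
Proof.
  apply Rle_trans with (sumr (fun k => sumr (fun j => ind (shell j k y)) d) T).
  { apply sumr_le; intros k _; apply ind_exists. }
  rewrite sumr_comm, <- (Rmult_1_r (INR d)), <- sumr_const.
  apply sumr_le; intros j _. apply sumr_ind_unique; intros a b; apply shell_unique.
Qed.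

Definition cluster_mate (x c : V) : Prop :=
  col c = col x /\ exists n, walk_in V adj (fun v => col v = col x) n x c.

Definition near_cluster (k : nat) (x y : V) : Prop :=
  exists c, cluster_mate x c /\ dist_le V adj y c k.

Variables d r R : nat.
Hypothesis cover : good_cover d r R col.

(* Crossing an edge without entering the k-shell of colour col x keeps one
   within distance k of the same component: a jump to another component
   would bring two separated components within distance 2k+1 < r. *)
Lemma near_cluster_step k x a b :
  (2 * k + 1 < r)%nat -> near_cluster k x a -> adj a b -> ~ shell (col x) k b ->
  near_cluster k x b.
Proof.
  intros Hkr [c [[Hc [n Hxc]] Hac]] Hab Hnshell.
  assert (Hbc : dist_le V adj b c (1 + k)).
  { apply dist_le_trans with a; [apply dist_le_adj; assumption | exact Hac]. }
  assert (Hnear : near_class (col x) b k).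
  { apply NNPP; intros Hfar; apply Hnshell; split; [exists c; split; assumption | exact Hfar]. }
  destruct Hnear as [u [Hu Hbu]].
  assert (Hcu : exists m, walk_in V adj (fun v => col v = col x) m c u).
  { apply NNPP; intros Hsep.
    destruct (dist_le_trans c b u _ _ (dist_le_sym adj_sym _ _ _ Hbc) Hbu) as [m [Hm Hw]].
    pose proof (proj2 (proj2 cover (col x)) c u Hc Hu Hsep m Hw); lia. }
  destruct Hcu as [m Hcu].
  exists u; repeat split; [exact Hu | exists (n + m)%nat; eapply walk_in_app; eauto | exact Hbu].
Qed.

Lemma shell_avoiding_walk_confined (P : V -> Prop) k x y n :
  (2 * k + 1 < r)%nat -> (forall v, P v -> ~ in_some_shell d k v) ->
  walk_in V adj P n x y -> dist_le V adj y x (k + R).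
Proof.
  intros Hkr Havoid Hw.
  assert (Hinv : forall n a b, walk_in V adj P n a b -> near_cluster k x a -> near_cluster k x b).
  { clear n Hw; intros n a b Hw; induction Hw as [|n a a' b Pa Haa' Hw' IH]; intros Hnear;
      [exact Hnear|].
    apply IH, (near_cluster_step k x a a' Hkr Hnear Haa').
    intros Hsh; apply (Havoid a' (walk_in_start _ _ _ _ Hw')).
    exists (col x); split; [apply (proj1 cover) | exact Hsh]. }
  assert (Hstart : near_cluster k x x).
  { exists x; repeat split; [exists 0%nat; constructor; reflexivity | apply dist_le_mono with 0%nat;
      [lia | apply dist_le_refl]]. }
  destruct (Hinv n x y Hw Hstart) as [c [[Hc Hxc] Hyc]].
  apply dist_le_trans with c; [exact Hyc|].
  apply dist_le_sym; [exact adj_sym|]. exact (proj1 (proj2 cover (col x)) x c eq_refl Hc Hxc).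
Qed.

End Shells.

Theorem mainTheorem6 (V : Type) (adj : V -> V -> Prop) :
  simple_graph V adj ->
  connected_graph V adj ->
  infinite_graph V ->
  bounded_degree V adj ->
  finite_asdim V adj ->
  weighted_hyperfinite V adj.
Proof.
  intros [adj_sym _] _ _ [D degD] [d Hasdim] eps Heps.
  destruct (INR_archimed eps (INR d) Heps) as [T0 HT0].
  set (T := S T0).
  assert (HTpos : 0 < INR T) by (apply lt_0_INR; unfold T; lia).
  assert (HdT : INR d / INR T <= eps).
  { apply Rmult_le_reg_r with (INR T); [exact HTpos|].
    replace (INR d / INR T * INR T) with (INR d) by (field; lra).
    unfold T; rewrite S_INR; lra. }
  destruct (Hasdim (2 * T)%nat) as [R [col cover]]; [unfold T; lia|].
  exists ((S D) ^ (T + R))%nat; split; [apply Nat.neq_0_lt_0, Nat.pow_nonzero; lia|].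
  intros l w Hnd Hw.
  destruct (averaging_selection w (in_some_shell (adj:=adj) col d) T (INR d) l)
    as [k [HkT Hlight]]; [unfold T; lia | exact Hw | intros y _; apply shell_multiplicity|].
  exists (filter (fun y => decide_prop (in_some_shell (adj:=adj) col d k y)) l).
  split; [apply NoDup_filter, Hnd|]. split; [intros y Hy; apply filter_In in Hy; tauto|].
  split.
  { apply Rle_trans with (1 := Hlight).
    apply Rmult_le_compat_r; [apply sumw_nonneg, Hw | exact HdT]. }
  intros x _ _ c Hndc Hreach.
  apply (ball_card_bound adj_sym D degD x); [exact Hndc|].
  intros y Hy; destruct (Hreach y Hy) as [n Hn].
  apply dist_le_mono with (k + R)%nat; [lia|].
  refine (shell_avoiding_walk_confined adj_sym col d (2 * T) R cover _ k x y n _ _ Hn); [lia|].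
  intros v [Hvl Hv] Hsh; apply Hv, filter_In; split; [exact Hvl | apply decide_prop_true, Hsh].
Qed.
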